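(* Let $f:[-1,1]^n \to [-1,1]$ be a multilinear function and let $D$ be a distribution over $\mathbb{R}$ with mean $\mu$ and variance $\sigma^2 < 1-\mu^2$. Then for every nonnegative integer $d$ there exists a polynomial $f^{\le d}$ of degree at most $d$ such that $$\mathbb{E}_{x \sim D^{\otimes n}}\big[(f(x) - f^{\le d}(x))^2\big] \le \Big( \frac{\sigma^2}{1-\mu^2} \Big)^d .$$
   Context: A function on $[-1,1]^n$ is multilinear if it is a polynomial of degree at most one in each variable. $D^{\otimes n}$ is the product distribution with i.i.d. coordinates of law $D$. *)

From HB Require Import structures.
From mathcomp Require Import all_boot all_order all_algebra.
From mathcomp Require Import all_classical all_reals all_analysis.
From mathcomp Require mpoly.
Set Implicit Arguments. Unset Strict Implicit. Unset Printing Implicit Defensive.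
Import Order.TTheory GRing.Theory Num.Theory.
Local Open Scope ring_scope.
Local Open Scope ereal_scope.

Definition peval {R : realType} {n : nat} (p : mpoly.mpoly n R) (x : 'rV[R]_n) : R :=
  mpoly.meval (fun i : 'I_n => x ord0 i) p.

Definition multilinear {R : realType} {n : nat} (p : mpoly.mpoly n R) : Prop :=
  forall m : mpoly.multinom n, mpoly.mcoeff m p != 0%R -> forall i : 'I_n, (mpoly.fun_of_multinom m i <= 1)%N.

Definition deg_le {R : realType} {n : nat} (p : mpoly.mpoly n R) (d : nat) : Prop :=
  forall m : mpoly.multinom n, mpoly.mcoeff m p != 0%R -> (mpoly.mdeg m <= d)%N.

(* Expectation of a nonnegative function F under the product distribution
   D^{(x) n} on R^n, computed as the iterated integral
   \int D(dx_0) \int D(dx_1) ... F(x_0,...,x_{n-1})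
   (equal to the product-measure integral by Tonelli). *)
Fixpoint prodE {R : realType} (D : probability R R) (n : nat) :
    ('rV[R]_n -> \bar R) -> \bar R :=
  match n return ('rV[R]_n -> \bar R) -> \bar R with
  | 0%N => fun F => F (const_mx 0%R)
  | n'.+1 => fun F =>
      \int[D]_t prodE D
        (fun v : 'rV[R]_n' => F (row_mx (const_mx (t : R) : 'rV[R]_1) v))
  end.

(* Write f in the centered monomials x_S = prod_(i in S) (x_i - mu), f = sum_S c_S x_S.
   Under D^(x)n the x_S are orthogonal with E[x_S^2] = sigma^(2|S|), hence
   E[(sum_S c_S x_S)^2] = sum_S sigma^(2|S|) c_S^2.  The same computation for the
   law on {-1, 1} with mean mu, whose variance is 1 - mu^2, combined with |f| <= 1
   on the cube gives sum_S (1 - mu^2)^|S| c_S^2 <= 1.  Keeping only the terms with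
   |S| <= d therefore leaves an error sum_(|S| > d) sigma^(2|S|) c_S^2, which is at
   most (sigma^2 / (1 - mu^2))^(d+1). *)

From mathcomp Require Import all_boot all_order all_algebra.
From mathcomp Require Import all_classical all_reals all_analysis.
From mathcomp Require mpoly.
From mathcomp Require Import ring lra zify measurable_realfun.
Import Order.TTheory GRing.Theory Num.Theory.
Local Open Scope ring_scope.

(* A pair (a, b) : mlt R n.+1 encodes a(x') + (x_0 - mu) b(x'), x' the last n
   coordinates; the leaves are thus the coefficients c_S in the basis x_S. *)
Fixpoint mlt (R : Type) (n : nat) : Type :=
  if n is n'.+1 then (mlt R n' * mlt R n')%type else R.

Section CenteredExpansion.
Context {R : comPzRingType}.

Fixpoint mlt_eval (mu : R) {n : nat} : mlt R n -> 'rV[R]_n -> R :=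
  match n return mlt R n -> 'rV[R]_n -> R with
  | 0 => fun c _ => c
  | n'.+1 => fun T x =>
      mlt_eval mu T.1 (rsubmx (x : 'rV_(1 + n'))) +
      (x ord0 ord0 - mu) * mlt_eval mu T.2 (rsubmx (x : 'rV_(1 + n')))
  end.

Fixpoint mlt0 {n : nat} : mlt R n :=
  if n is n'.+1 then (mlt0, mlt0) else 0.

Fixpoint mlt_add {n : nat} : mlt R n -> mlt R n -> mlt R n :=
  match n return mlt R n -> mlt R n -> mlt R n with
  | 0 => fun a b => a + b
  | n'.+1 => fun T U => (mlt_add T.1 U.1, mlt_add T.2 U.2)
  end.

Fixpoint mlt_scale (c : R) {n : nat} : mlt R n -> mlt R n :=
  match n return mlt R n -> mlt R n with
  | 0 => fun a => c * a
  | n'.+1 => fun T => (mlt_scale c T.1, mlt_scale c T.2)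
  end.

(* mlt_form s T U = sum_S s^|S| T_S U_S. *)
Fixpoint mlt_form (s : R) {n : nat} : mlt R n -> mlt R n -> R :=
  match n return mlt R n -> mlt R n -> R with
  | 0 => fun a b => a * b
  | n'.+1 => fun T U => mlt_form s T.1 U.1 + s * mlt_form s T.2 U.2
  end.

Definition mlt_norm (s : R) {n : nat} (T : mlt R n) := mlt_form s T T.

Lemma mlt_eval0 mu {n} (x : 'rV[R]_n) : mlt_eval mu mlt0 x = 0.
Proof. by elim: n x => [//|n IH] x /=; rewrite !IH mulr0 addr0. Qed.

Lemma mlt_evalD mu {n} (T U : mlt R n) x :
  mlt_eval mu (mlt_add T U) x = mlt_eval mu T x + mlt_eval mu U x.
Proof. elim: n T U x => [//|n IH] T U x /=; rewrite !IH; ring. Qed.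

Lemma mlt_evalZ mu c {n} (T : mlt R n) x :
  mlt_eval mu (mlt_scale c T) x = c * mlt_eval mu T x.
Proof. elim: n T x => [//|n IH] T x /=; rewrite !IH; ring. Qed.

Lemma mlt_formDl s {n} (T U V : mlt R n) :
  mlt_form s (mlt_add T U) V = mlt_form s T V + mlt_form s U V.
Proof. elim: n T U V => [|n IH] T U V /=; rewrite ?IH; ring. Qed.

Lemma mlt_formZl s c {n} (T V : mlt R n) :
  mlt_form s (mlt_scale c T) V = c * mlt_form s T V.
Proof. elim: n T V => [|n IH] T V /=; rewrite ?IH; ring. Qed.

Lemma mlt_formC s {n} (T V : mlt R n) : mlt_form s T V = mlt_form s V T.
Proof.
by elim: n T V => [|n IH] T V /=; [rewrite mulrC | rewrite (IH T.1) (IH T.2)].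
Qed.

Lemma mlt_formDr s {n} (T U V : mlt R n) :
  mlt_form s V (mlt_add T U) = mlt_form s V T + mlt_form s V U.
Proof. by rewrite mlt_formC mlt_formDl !(mlt_formC s V). Qed.

Lemma mlt_formZr s c {n} (T V : mlt R n) :
  mlt_form s V (mlt_scale c T) = c * mlt_form s V T.
Proof. by rewrite mlt_formC mlt_formZl (mlt_formC s V). Qed.

Lemma mlt_normDZ s {n} (a b : mlt R n) c :
  mlt_norm s (mlt_add a (mlt_scale c b)) =
  mlt_norm s a + 2 * c * mlt_form s a b + c ^+ 2 * mlt_norm s b.
Proof.
rewrite /mlt_norm !mlt_formDl !mlt_formDr !mlt_formZl !mlt_formZr (mlt_formC s b a).
ring.
Qed.

Lemma mlt_eval_row_mx mu {n} (a b : mlt R n) (t : R) (v : 'rV[R]_n) :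
  mlt_eval mu ((a, b) : mlt R n.+1) (row_mx (const_mx t : 'rV_1) v) =
  mlt_eval mu (mlt_add a (mlt_scale (t - mu) b)) v.
Proof.
rewrite /= row_mxKr mlt_evalD mlt_evalZ.
have -> : ord0 = lshift n (ord0 : 'I_1) by apply: val_inj.
by rewrite (@row_mxEl _ 1 1 n) mxE.
Qed.

Fixpoint mlt_head (d : nat) {n : nat} : mlt R n -> mlt R n :=
  match n return mlt R n -> mlt R n with
  | 0 => id
  | n'.+1 => fun T =>
      (mlt_head d T.1, if d is d'.+1 then mlt_head d' T.2 else mlt0)
  end.

Fixpoint mlt_tail (d : nat) {n : nat} : mlt R n -> mlt R n :=
  match n return mlt R n -> mlt R n with
  | 0 => fun=> 0
  | n'.+1 => fun T =>
      (mlt_tail d T.1, if d is d'.+1 then mlt_tail d' T.2 else T.2)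
  end.

Lemma mlt_eval_head_tail mu d {n} (T : mlt R n) x :
  mlt_eval mu T x = mlt_eval mu (mlt_head d T) x + mlt_eval mu (mlt_tail d T) x.
Proof.
elim: n d T x => [|n IH] d T x /=; first by rewrite addr0.
rewrite (IH d T.1); case: d => [|d] /=; first by rewrite mlt_eval0; ring.
by rewrite (IH d T.2); ring.
Qed.

Lemma mlt_monomial mu {n} (m : 'I_n -> nat) :
  (forall i, m i <= 1)%N ->
  exists T : mlt R n, forall x, mlt_eval mu T x = \prod_i x ord0 i ^+ m i.
Proof.
elim: n m => [|n IH] m m_le1; first by exists 1 => x; rewrite big_ord0.
have [T TE] := IH (fun i => m (lift ord0 i)) (fun i => m_le1 _).
have prod_split (x : 'rV[R]_n.+1) : \prod_i x ord0 i ^+ m i =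
    x ord0 ord0 ^+ m ord0 * mlt_eval mu T (rsubmx (x : 'rV_(1 + n))).
  rewrite big_ord_recl TE; congr (_ * _).
  by apply: eq_bigr => i _; rewrite mxE; congr (x _ _ ^+ _); apply: val_inj.
have [m0_eq0 | m0_eq1] : m ord0 = 0%N \/ m ord0 = 1%N.
  by move: (m_le1 ord0); case: (m ord0) => [|[|]]; auto.
  exists ((T, mlt0) : mlt R n.+1) => x.
  by rewrite prod_split m0_eq0 expr0 mul1r /= mlt_eval0 mulr0 addr0.
exists ((mlt_scale mu T, T) : mlt R n.+1) => x.
by rewrite prod_split m0_eq1 expr1 /= mlt_evalZ; ring.
Qed.

End CenteredExpansion.

Section Positivity.
Context {R : realDomainType}.

Lemma mlt_norm_ge0 (s : R) {n} (T : mlt R n) : 0 <= s -> 0 <= mlt_norm s T.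
Proof.
rewrite /mlt_norm; elim: n T => [|n IH] T s_ge0 /=; first by rewrite -expr2 sqr_ge0.
by rewrite addr_ge0 ?mulr_ge0 ?IH.
Qed.

Lemma ler_mlt_norm (s s' : R) {n} (T : mlt R n) :
  0 <= s <= s' -> mlt_norm s T <= mlt_norm s' T.
Proof.
move=> /andP[s_ge0 le_ss']; rewrite /mlt_norm; elim: n T => [//|n IH] T /=.
rewrite lerD ?IH // (le_trans (ler_wpM2l s_ge0 (IH _))) // ler_wpM2r //.
exact: mlt_norm_ge0 (le_trans s_ge0 le_ss').
Qed.

Lemma row_mx_cube {n} (c : R) (v : 'rV[R]_n) :
  -1 <= c <= 1 -> (forall i, -1 <= v ord0 i <= 1) ->
  forall i, -1 <= (row_mx (const_mx c : 'rV_1) v) ord0 i <= 1.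
Proof.
move=> c_cube v_cube i; case: (splitP i) => j ij.
  by rewrite (_ : i = lshift n j) ?row_mxEl ?mxE //; apply: val_inj.
by rewrite (_ : i = rshift 1 j) ?row_mxEr //; apply: val_inj.
Qed.

(* Averaging the bound at x_0 = 1 and x_0 = -1 with the weights (1 + mu)/2 and
   (1 - mu)/2 of the law on {-1, 1} with mean mu cancels the cross term. *)
Lemma mlt_norm_le1 (mu : R) {n} (T : mlt R n) : -1 <= mu <= 1 ->
  (forall x : 'rV[R]_n, (forall i, -1 <= x ord0 i <= 1) -> mlt_eval mu T x ^+ 2 <= 1) ->
  mlt_norm (1 - mu ^+ 2) T <= 1.
Proof.
move=> /andP[mu_ge mu_le]; elim: n T => [|n IH] T T_le1.
  by rewrite /mlt_norm /= -expr2; apply: (T_le1 (const_mx 0)); case.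
case: T T_le1 => a b T_le1.
have at_vertex (c : R) : -1 <= c <= 1 ->
    mlt_norm (1 - mu ^+ 2) (mlt_add a (mlt_scale (c - mu) b)) <= 1.
  move=> c_cube; apply: IH => v v_cube.
  by rewrite -mlt_eval_row_mx; apply/T_le1/row_mx_cube.
have one_cube : -1 <= (1 : R) <= 1 by apply/andP; split; lra.
have mone_cube : -1 <= (-1 : R) <= 1 by apply/andP; split; lra.
move: (at_vertex _ one_cube) (at_vertex _ mone_cube).
rewrite !mlt_normDZ /mlt_norm /=.
move: (mlt_form _ a a) (mlt_form _ a b) (mlt_form _ b b) => A B C; nra.
Qed.

End Positivity.

Lemma mlt_norm_tail {R : realFieldType} (s s' : R) d {n} (T : mlt R n) :
  0 <= s <= s' -> 0 < s' ->
  mlt_norm s (mlt_tail d T) <= (s / s') ^+ d.+1 * mlt_norm s' T.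
Proof.
move=> /andP[s_ge0 le_ss'] s'_gt0.
have r_ge0 : 0 <= s / s' by rewrite divr_ge0 // ltW.
elim: n d T => [|n IH] d T.
  by rewrite /mlt_norm /= mul0r mulr_ge0 ?exprn_ge0 // -expr2 sqr_ge0.
case: T => a b.
have tail_b : mlt_norm s (if d is d'.+1 then mlt_tail d' b else b) <=
    (s / s') ^+ d * mlt_norm s' b.
  by case: d => [|d]; [rewrite expr0 mul1r ler_mlt_norm ?s_ge0 | exact: IH].
have -> : (s / s') ^+ d.+1 * mlt_norm s' ((a, b) : mlt R n.+1) =
    (s / s') ^+ d.+1 * mlt_norm s' a + s * ((s / s') ^+ d * mlt_norm s' b).
  by rewrite /mlt_norm /= exprS; field; rewrite gt_eqF.
by rewrite /mlt_norm /= lerD ?IH // ler_wpM2l.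
Qed.

Lemma prodES {R : realType} (D : probability R R) {n} (F : 'rV[R]_n.+1 -> \bar R) :
  prodE D F = (\int[D]_t prodE D (fun v => F (row_mx (const_mx t : 'rV_1) v)))%E.
Proof. by []. Qed.

Section CenteredMoments.
Context {R : realType} {D : probability R R} {mu s2 : R}.
Hypotheses (D_int : D.-integrable setT (fun t : R => t%:E))
  (D_mean : (\int[D]_t (t%:E) = mu%:E)%E)
  (D_var : (\int[D]_t (((t - mu) ^+ 2)%:E) = s2%:E)%E).

Lemma integral_centered_quadratic (a b c : R) :
  (\int[D]_t ((a + b * (t - mu) + c * (t - mu) ^+ 2)%:E) = (a + c * s2)%:E)%E.
Proof.
have cst_int k : D.-integrable setT (fun=> k%:E).
  exact: finite_measure_integrable_cst.
have sqr_int : D.-integrable setT (fun t : R => ((t - mu) ^+ 2)%:E).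
  apply/integrableP; split.
    by apply/measurable_EFinP; apply: measurable_funX; apply: measurable_funB.
  under eq_integral => t _ do rewrite gee0_abs ?lee_fin ?sqr_ge0 //.
  by rewrite D_var ltry.
rewrite (_ : (fun t => _) = (fun t =>
    (a - b * mu)%:E + (b%:E * t%:E + c%:E * ((t - mu) ^+ 2)%:E)))%E; last first.
  by apply: funext => t; rewrite -!EFinM -!EFinD; congr EFin; ring.
rewrite integralD ?integrableD ?integrableZl // integralD ?integrableZl //.
rewrite !integralZl // D_mean D_var integral_cst // [X in (_ * X)%E]probability_setT mule1.
by rewrite -!EFinM -!EFinD; congr EFin; ring.
Qed.

Lemma prodE_sqr_mlt_eval {n} (T : mlt R n) :
  prodE D (fun x => (mlt_eval mu T x ^+ 2)%:E) = (mlt_norm s2 T)%:E.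
Proof.
elim: n T => [|n IH] T; first by rewrite /= expr2.
case: T => a b; rewrite prodES.
transitivity (\int[D]_t ((mlt_norm s2 a + 2 * mlt_form s2 a b * (t - mu) +
                          mlt_norm s2 b * (t - mu) ^+ 2)%:E))%E.
  apply: eq_integral => t _; under eq_fun => v do rewrite mlt_eval_row_mx.
  by rewrite IH mlt_normDZ; congr EFin; ring.
by rewrite integral_centered_quadratic /mlt_norm /= mulrC.
Qed.

End CenteredMoments.

Import -(notations) mpoly.

Section ExpansionPolynomial.
Context {R : idomainType}.

Fixpoint mlt_mpoly (mu : R) {N n : nat} : ('I_n -> 'I_N) -> mlt R n -> mpoly N R :=
  match n return ('I_n -> 'I_N) -> mlt R n -> mpoly N R with
  | 0 => fun _ c => mpolyC N c
  | n'.+1 => fun emb T =>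
      let emb' i := emb (rshift 1 i) in
      mlt_mpoly mu emb' T.1 +
      (mpolyX R (mnm1 (emb ord0)) - mpolyC N mu) * mlt_mpoly mu emb' T.2
  end.

Lemma meval_mlt_mpoly mu {N n} (emb : 'I_n -> 'I_N) (T : mlt R n) (v : 'I_N -> R) :
  meval v (mlt_mpoly mu emb T) = mlt_eval mu T (\row_i v (emb i)).
Proof.
elim: n emb T => [|n IH] emb T /=; first by rewrite mevalC.
rewrite mevalD mevalM mevalB mevalC mevalXU !IH mxE.
suff -> : rsubmx (\row_i v (emb i) : 'rV_(1 + n)) = \row_i v (emb (rshift 1 i)) by [].
by apply/rowP => i; rewrite !mxE.
Qed.

Lemma mlt_mpoly0 mu {N n} (emb : 'I_n -> 'I_N) : mlt_mpoly mu emb mlt0 = 0.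
Proof.
by elim: n emb => [|n IH] emb /=; rewrite ?mpolyC0 // !IH mulr0 addr0.
Qed.

Lemma mpolyX_subC_neq0 {N} (i : 'I_N) (c : R) : mpolyX R (mnm1 i) - mpolyC N c != 0.
Proof.
apply/eqP => /(congr1 (meval (fun=> c + 1)))/eqP.
by rewrite meval0 mevalB mevalC mevalXU addrAC subrr add0r oner_eq0.
Qed.

Lemma msize_mpolyX_subC {N} (i : 'I_N) (c : R) :
  (msize (mpolyX R (mnm1 i) - mpolyC N c) <= 2)%N.
Proof.
rewrite (leq_trans (msizeD_le _ _)) // geq_max msizeN msizeC msizeX mdeg1.
by case: (_ != 0).
Qed.

Lemma msize_mlt_mpoly_head mu d {N n} (emb : 'I_n -> 'I_N) (T : mlt R n) :
  (msize (mlt_mpoly mu emb (mlt_head d T)) <= d.+1)%N.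
Proof.
elim: n emb d T => [|n IH] emb d T /=; first by rewrite msizeC; case: (_ != 0).
rewrite (leq_trans (msizeD_le _ _)) // geq_max IH /=.
case: d => [|d]; first by rewrite mlt_mpoly0 mulr0 msize0.
set q := mlt_mpoly _ _ _.
have [->|q_neq0] := eqVneq q 0; first by rewrite mulr0 msize0.
rewrite msizeM ?mpolyX_subC_neq0 //.
have := msize_mpolyX_subC (emb ord0) mu; have := IH (fun i => emb (rshift 1 i)) d T.2.
rewrite -/q; lia.
Qed.

End ExpansionPolynomial.

Lemma deg_le_msize {R : realType} {n} (p : mpoly n R) d :
  (msize p <= d.+1)%N -> deg_le p d.
Proof.
move=> p_size m /negbTE m_supp; rewrite -ltnS (leq_trans _ p_size) //.
by apply: msize_mdeg_lt; rewrite mcoeff_msupp m_supp.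
Qed.

Lemma peval_mlt_mpoly {R : realType} (mu : R) {n} (T : mlt R n) x :
  peval (mlt_mpoly mu id T) x = mlt_eval mu T x.
Proof. by rewrite /peval meval_mlt_mpoly; congr mlt_eval; apply/rowP => i; rewrite mxE. Qed.

Lemma multilinear_mlt {R : realType} {n} {f : mpoly n R} (mu : R) :
  multilinear f -> exists T : mlt R n, forall x, mlt_eval mu T x = peval f x.
Proof.
move=> f_ml; suff [T TE] : exists T : mlt R n, forall x,
    mlt_eval mu T x = \sum_(m <- msupp f) mcoeff m f * \prod_i x ord0 i ^+ m i.
  by exists T => x; rewrite TE /peval mevalE.
have : {subset msupp f <= [pred m : multinom n | [forall i, m i <= 1]%N]}.
  by move=> m; rewrite mcoeff_msupp => /f_ml m_le1; apply/forallP.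
elim: (msupp f) => [|m s IH] s_ml.
  by exists mlt0 => x; rewrite mlt_eval0 big_nil.
have [|T TE] := IH; first by move=> m' m's; apply: s_ml; rewrite inE m's orbT.
have [M ME] := mlt_monomial mu (fun i => m i) (forallP (s_ml m (mem_head m s))).
exists (mlt_add (mlt_scale (mcoeff m f) M) T) => x.
by rewrite mlt_evalD mlt_evalZ ME TE big_cons.
Qed.

Theorem mainTheorem4 (R : realType) (n : nat) (f : mpoly.mpoly n R)
  (D : probability R R) (mu sigma2 : R) (d : nat) :
  multilinear f ->
  (forall x : 'rV[R]_n, (forall i, -1 <= x ord0 i <= 1) -> -1 <= peval f x <= 1) ->
  D.-integrable setT (fun t : R => t%:E) ->
  (\int[D]_t (t%:E) = mu%:E)%E ->
  (\int[D]_t (((t - mu) ^+ 2)%:E) = sigma2%:E)%E ->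
  sigma2 < 1 - mu ^+ 2 ->
  exists g : mpoly.mpoly n R,
    deg_le g d /\
    (prodE D (fun x => ((peval f x - peval g x) ^+ 2)%:E)
       <= ((sigma2 / (1 - mu ^+ 2)) ^+ d)%:E)%E.
Proof.
move=> f_ml f_cube D_int D_mean D_var var_lt.
have var_ge0 : 0 <= sigma2.
  by rewrite -lee_fin -D_var integral_ge0 // => t _; rewrite lee_fin sqr_ge0.
have mu_cube : -1 <= mu <= 1 by apply/andP; split; nra.
have [T fE] := multilinear_mlt mu f_ml.
exists (mlt_mpoly mu id (mlt_head d T)); split.
  exact/deg_le_msize/msize_mlt_mpoly_head.
under eq_fun => x do
  rewrite peval_mlt_mpoly -fE (mlt_eval_head_tail mu d) addrAC subrr add0r.
rewrite (prodE_sqr_mlt_eval D_int D_mean D_var) lee_fin.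
have T_le1 : mlt_norm (1 - mu ^+ 2) T <= 1.
  apply: mlt_norm_le1 => // x /f_cube; rewrite fE; case/andP => *; nra.
have s_bounds : 0 <= sigma2 <= 1 - mu ^+ 2 by rewrite var_ge0 (ltW var_lt).
have s'_gt0 : 0 < 1 - mu ^+ 2 by lra.
have r_le1 : sigma2 / (1 - mu ^+ 2) <= 1 by rewrite ler_pdivrMr // mul1r ltW.
apply: le_trans (mlt_norm_tail _ _ d T s_bounds s'_gt0) _.
have s'_ge0 := ltW s'_gt0.
rewrite exprSr -mulrA ler_piMr ?exprn_ge0 ?divr_ge0 //.
by rewrite mulr_ile1 ?divr_ge0 ?mlt_norm_ge0.
Qed.
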